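(* Let $S(\mathbf{G}(V,E),\mathbf{\Sigma})$ be a constrained switching system with $\mathbf{\Sigma}\subset\mathbb{R}^{n\times n}$, nodes $V=\{v_1,\dots,v_{|V|}\}$, and let $\mathbf{\Sigma}_{\mathbf{G}}=\{A_{(v_i,v_j,\sigma)} : (v_i,v_j,\sigma)\in E\}$ be its Kronecker lift, where $A_{(v_i,v_j,\sigma)}=(\mathbf{e}(j)\mathbf{e}(i)^\top)\otimes A_\sigma\in\mathbb{R}^{n|V|\times n|V|}$. Let $\gamma>0$. There exists a symmetric $Q_{\mathbf{G}}\succ0$ in $\mathbb{R}^{n|V|\times n|V|}$ such that $$A_{(v,w,\sigma)}^\top Q_{\mathbf{G}}A_{(v,w,\sigma)}-\gamma^2Q_{\mathbf{G}}\preceq0\quad\text{for all } (v,w,\sigma)\in E$$ if and only if $S$ has a quadratic multinorm with value at most $\gamma$.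
   Context: An automaton $\mathbf{G}(V,E)$ is a strongly connected directed graph with finite node set $V$ and finite edge set $E$ of labelled edges $(v,w,\sigma)$, $\sigma$ indexing a matrix $A_\sigma\in\mathbf{\Sigma}$; $S(\mathbf{G},\mathbf{\Sigma})$ is the switching system $x_{t+1}=A_{\sigma(t)}x_t$ whose switching sequences are label sequences of paths in $\mathbf{G}$. $\mathbf{e}(k)$ is the $k$-th canonical basis vector of $\mathbb{R}^{|V|}$ and $\otimes$ the Kronecker product. A quadratic multinorm for $S$ is a family $\{|\cdot|_v : v\in V\}$ with $|x|_v=(x^\top Q_vx)^{1/2}$ for symmetric $Q_v\succ0$; its value is $\min\{\gamma : |A_\sigma x|_w\le\gamma|x|_v\ \forall x\in\mathbb{R}^n,\ \forall(v,w,\sigma)\in E\}$ (equivalently the least $\gamma$ with $A_\sigma^\top Q_wA_\sigma\preceq\gamma^2Q_v$ for all edges). *)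

From HB Require Import structures.
From mathcomp Require Import all_boot all_order all_algebra.
From mathcomp Require Export mxtens.
Set Implicit Arguments. Unset Strict Implicit. Unset Printing Implicit Defensive.
Import Order.TTheory GRing.Theory Num.Theory.
Local Open Scope ring_scope.

Definition qform (R : realFieldType) (k : nat) (M : 'M[R]_k) (x : 'cV[R]_k) : R :=
  (x^T *m M *m x) 0 0.

Definition symmetric_mx (R : realFieldType) (k : nat) (M : 'M[R]_k) : Prop :=
  M^T = M.

Definition posdef (R : realFieldType) (k : nat) (M : 'M[R]_k) : Prop :=
  symmetric_mx M /\ forall x : 'cV[R]_k, x != 0 -> 0 < qform M x.

Definition loewner_le (R : realFieldType) (k : nat) (M N : 'M[R]_k) : Prop :=
  forall x : 'cV[R]_k, qform M x <= qform N x.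

Definition evec (R : realFieldType) (N : nat) (k : 'I_N) : 'cV[R]_N := delta_mx k 0.

Definition strongly_connected (N m : nat) (E : {set 'I_N * 'I_N * 'I_m}) : Prop :=
  forall v w : 'I_N, connect (fun a b => [exists s : 'I_m, (a, b, s) \in E]) v w.

Definition kron_lift (R : realFieldType) (n N m : nat) (A : 'I_m -> 'M[R]_n)
  (e : 'I_N * 'I_N * 'I_m) : 'M[R]_(N * n) :=
  (evec R e.1.2 *m (evec R e.1.1)^T) *t A e.2.

Definition multinorm_bound (R : realFieldType) (n N m : nat) (A : 'I_m -> 'M[R]_n)
  (E : {set 'I_N * 'I_N * 'I_m}) (Q : 'I_N -> 'M[R]_n) (g : R) : Prop :=
  forall e, e \in E ->
    loewner_le ((A e.2)^T *m Q e.1.2 *m A e.2) (g ^+ 2 *: Q e.1.1).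

Definition quadratic_multinorm (R : realFieldType) (n N : nat) (Q : 'I_N -> 'M[R]_n) : Prop :=
  forall v, posdef (Q v).

Definition multinorm_value (R : realFieldType) (n N m : nat) (A : 'I_m -> 'M[R]_n)
  (E : {set 'I_N * 'I_N * 'I_m}) (Q : 'I_N -> 'M[R]_n) (g : R) : Prop :=
  0 <= g /\ multinorm_bound A E Q g /\
  forall g', 0 <= g' -> multinorm_bound A E Q g' -> g <= g'.

From HB Require Import structures.
From mathcomp Require Import all_boot all_order all_algebra.
From mathcomp Require Import mxtens classical_sets reals.
Set Implicit Arguments. Unset Strict Implicit. Unset Printing Implicit Defensive.
Import Order.TTheory GRing.Theory Num.Theory.
Local Open Scope ring_scope.

(* The block selectors S_i := e(i)^T (x) I_n satisfy S_i S_j^T = [i = j] I and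
   sum_i S_i^T S_i = I, and they factor the lift as A_(v,w,s) = S_w^T A_s S_v.
   So a common Q_G compresses to the multinorm Q_v := S_v Q_G S_v^T, and a
   multinorm assembles into the block-diagonal Q_G := sum_v S_v^T Q_v S_v: the
   lift of an edge moves block v of x into block w only, so the Loewner
   inequalities on both sides match up.  The value of a multinorm is an
   infimum, and it is attained because each constraint a <= g^2 b on g >= 0
   is the lower bound sqrt (a / b) <= g when b > 0. *)

Section QuadraticForm.
Variable R : realFieldType.
Implicit Types k l : nat.

Lemma qform_mulmx k l (M : 'M[R]_k) (B : 'M[R]_(k, l)) x :
  qform (B^T *m M *m B) x = qform M (B *m x).
Proof. by rewrite /qform trmx_mul !mulmxA. Qed.

Lemma qform_mulmx_tr k l (M : 'M[R]_k) (B : 'M[R]_(l, k)) x :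
  qform (B *m M *m B^T) x = qform M (B^T *m x).
Proof. by rewrite -qform_mulmx trmxK. Qed.

Lemma qform0 k (x : 'cV[R]_k) : qform 0 x = 0.
Proof. by rewrite /qform mulmx0 mul0mx mxE. Qed.

Lemma qform0x k (M : 'M[R]_k) : qform M 0 = 0.
Proof. by rewrite /qform mulmx0 mxE. Qed.

Lemma qformB k (M M' : 'M[R]_k) x : qform (M - M') x = qform M x - qform M' x.
Proof. by rewrite /qform mulmxBr mulmxBl [LHS]mxE [X in _ + X]mxE. Qed.

Lemma qformZ k c (M : 'M[R]_k) x : qform (c *: M) x = c * qform M x.
Proof. by rewrite /qform -scalemxAr -scalemxAl mxE. Qed.

Lemma qform_sum k I (r : seq I) (P : pred I) (F : I -> 'M[R]_k) x :
  qform (\sum_(i <- r | P i) F i) x = \sum_(i <- r | P i) qform (F i) x.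
Proof. by rewrite /qform mulmx_sumr mulmx_suml summxE. Qed.

Lemma loewner_le_subr0 k (M M' : 'M[R]_k) :
  loewner_le (M - M') 0 <-> loewner_le M M'.
Proof.
by split=> le x; have := le x; rewrite qformB qform0 subr_le0.
Qed.

Lemma posdef_qform_ge0 k (M : 'M[R]_k) x : posdef M -> 0 <= qform M x.
Proof. by case=> _ M_pos; have [->|/M_pos/ltW //] := eqVneq x 0; rewrite qform0x. Qed.

Lemma posdef_mulmx_tr k l (M : 'M[R]_k) (B : 'M[R]_(l, k)) (C : 'M[R]_(k, l)) :
  B *m C = 1%:M -> posdef M -> posdef (B *m M *m B^T).
Proof.
move=> BC [M_sym M_pos]; split.
  by rewrite /symmetric_mx !trmx_mul trmxK M_sym mulmxA.
move=> x x_neq0; rewrite qform_mulmx_tr; apply: M_pos; apply: contraNneq x_neq0.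
by move=> Bx0; rewrite -[x]mul1mx -[1%:M]trmx1 -BC trmx_mul -mulmxA Bx0 mulmx0.
Qed.

End QuadraticForm.

Lemma sumr_delta_mull (R : pzSemiRingType) (I : finType) (i0 : I) (F : I -> R) :
  \sum_i (i0 == i)%:R * F i = F i0.
Proof.
rewrite (bigD1 i0) //= eqxx mul1r big1 ?addr0 // => i; rewrite eq_sym => /negPf->.
by rewrite mul0r.
Qed.

Section BlockSelection.
Variables (R : comPzRingType) (N n : nat).

(* Row a of block_sel i picks coordinate (i, a) of R^(N n), i.e. e(i)^T (x) I_n. *)
Definition block_sel (i : 'I_N) : 'M[R]_(n, N * n) :=
  rowsub (fun a => mxtens_index (i, a)) 1%:M.

Lemma block_selE i a j b :
  block_sel i a (mxtens_index (j, b)) = ((j == i) && (b == a))%:R.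
Proof. by rewrite !mxE (inj_eq (can_inj (@mxtens_indexK _ _))) eq_sym. Qed.

Lemma tr_block_sel_mulE i p (B : 'M[R]_(n, p)) j b c :
  ((block_sel i)^T *m B) (mxtens_index (j, b)) c = (j == i)%:R * B b c.
Proof.
rewrite mxE; under eq_bigr => a _ do rewrite mxE block_selE -mulnb natrM -mulrA.
by rewrite -mulr_sumr sumr_delta_mull.
Qed.

Lemma block_sel_mul i p (B : 'M[R]_(N * n, p)) :
  block_sel i *m B = rowsub (fun a => mxtens_index (i, a)) B.
Proof. by rewrite mul_rowsub_mx mul1mx. Qed.

Lemma block_sel_mul_tr i j : block_sel i *m (block_sel j)^T = (i == j)%:R%:M.
Proof.
apply/matrixP => a b; rewrite block_sel_mul !mxE.
rewrite (inj_eq (can_inj (@mxtens_indexK _ _))) xpair_eqE eq_sym [b == a]eq_sym.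
by case: (i == j); case: (a == b).
Qed.

Lemma sum_tr_block_sel_mul : \sum_i (block_sel i)^T *m block_sel i = 1%:M.
Proof.
apply/matrixP => k l; case: (mxtens_indexP k) => k1 k2.
rewrite summxE; under eq_bigr => i _ do rewrite tr_block_sel_mulE.
by rewrite sumr_delta_mull !mxE.
Qed.

Lemma mul_block_selE i p (B : 'M[R]_(p, n)) c j b :
  (B *m block_sel i) c (mxtens_index (j, b)) = (j == i)%:R * B c b.
Proof.
have -> : (B *m block_sel i) c (mxtens_index (j, b)) =
    (B *m block_sel i)^T (mxtens_index (j, b)) c by rewrite [RHS]mxE.
by rewrite trmx_mul tr_block_sel_mulE mxE.
Qed.

End BlockSelection.
Arguments block_sel {R N n} i.

Lemma kron_liftE (R : realFieldType) (n N m : nat) (A : 'I_m -> 'M[R]_n)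
    (e : 'I_N * 'I_N * 'I_m) :
  kron_lift A e = (block_sel e.1.2)^T *m A e.2 *m block_sel e.1.1.
Proof.
apply/matrixP => k l.
case: (mxtens_indexP k) => k1 k2; case: (mxtens_indexP l) => l1 l2.
rewrite /kron_lift tensmxE -mulmxA tr_block_sel_mulE mul_block_selE.
by rewrite mxE big_ord1 !mxE !eqxx !andbT mulrA.
Qed.

Section BlockDiagonal.
Variables (R : realFieldType) (N n : nat).

Definition block_diag (Q : 'I_N -> 'M[R]_n) : 'M[R]_(N * n) :=
  \sum_i (block_sel i)^T *m Q i *m block_sel i.

Definition diag_block (QG : 'M[R]_(N * n)) (i : 'I_N) : 'M[R]_n :=
  block_sel i *m QG *m (block_sel i)^T.

Lemma block_sel_mul_tr_id (i : 'I_N) :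
  block_sel i *m (block_sel i)^T = 1%:M :> 'M[R]_n.
Proof. by rewrite block_sel_mul_tr eqxx. Qed.

Lemma qform_block_diag Q x :
  qform (block_diag Q) x = \sum_i qform (Q i) (block_sel i *m x).
Proof. by rewrite qform_sum; apply: eq_bigr => i _; rewrite qform_mulmx. Qed.

Lemma posdef_diag_block QG i : posdef QG -> posdef (diag_block QG i).
Proof. exact/posdef_mulmx_tr/block_sel_mul_tr_id. Qed.

Lemma posdef_block_diag Q : (forall i, posdef (Q i)) -> posdef (block_diag Q).
Proof.
move=> Q_pos; split.
  rewrite /symmetric_mx raddf_sum; apply: eq_bigr => i _ /=.
  by rewrite !trmx_mul trmxK (proj1 (Q_pos i)) mulmxA.
move=> x x_neq0; rewrite qform_block_diag.
have [i sel_x_neq0 | sel_x_eq0] := pickP (fun i => block_sel i *m x != 0).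
  rewrite (bigD1 i) //=; apply: lt_le_trans (proj2 (Q_pos i) _ sel_x_neq0) _.
  by rewrite lerDl sumr_ge0 // => j _; apply: posdef_qform_ge0.
case/eqP: x_neq0; rewrite -[x]mul1mx -sum_tr_block_sel_mul mulmx_suml big1 // => i _.
by move/negbFE/eqP: (sel_x_eq0 i) => sel_x0; rewrite -mulmxA sel_x0 mulmx0.
Qed.

End BlockDiagonal.

Section KroneckerLift.
Variables (R : realFieldType) (n N m : nat) (A : 'I_m -> 'M[R]_n).
Variable e : 'I_N * 'I_N * 'I_m.

Lemma kron_lift_mul_tr_block_sel :
  kron_lift A e *m (block_sel e.1.1)^T = (block_sel e.1.2)^T *m A e.2.
Proof. by rewrite kron_liftE -!mulmxA block_sel_mul_tr_id mulmx1. Qed.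

Lemma block_sel_mul_kron_lift j :
  block_sel j *m kron_lift A e = (j == e.1.2)%:R *: (A e.2 *m block_sel e.1.1).
Proof. by rewrite kron_liftE !mulmxA block_sel_mul_tr mul_scalar_mx scalemxAl. Qed.

Lemma loewner_kron_lift_diag_block QG c :
  loewner_le ((kron_lift A e)^T *m QG *m kron_lift A e) (c *: QG) ->
  loewner_le ((A e.2)^T *m diag_block QG e.1.2 *m A e.2) (c *: diag_block QG e.1.1).
Proof.
move=> le_QG y; have := le_QG ((block_sel e.1.1)^T *m y).
rewrite qform_mulmx mulmxA kron_lift_mul_tr_block_sel !qformZ.
by rewrite qform_mulmx /diag_block !qform_mulmx_tr mulmxA.
Qed.

Lemma loewner_kron_lift_block_diag Q c :
  0 <= c -> (forall i, posdef (Q i)) ->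
  loewner_le ((A e.2)^T *m Q e.1.2 *m A e.2) (c *: Q e.1.1) ->
  loewner_le ((kron_lift A e)^T *m block_diag Q *m kron_lift A e) (c *: block_diag Q).
Proof.
move=> c_ge0 Q_pos le_Q x; rewrite qform_mulmx qformZ !qform_block_diag.
under eq_bigr => j _ do rewrite mulmxA block_sel_mul_kron_lift.
rewrite (bigD1 e.1.2) //= big1 => [|j /negPf->]; last first.
  by rewrite mulr0n scale0r mul0mx qform0x.
rewrite eqxx scale1r addr0 -mulmxA -qform_mulmx.
apply: le_trans (le_Q _) _; rewrite qformZ ler_wpM2l // (bigD1 e.1.1) //=.
by rewrite lerDl sumr_ge0 // => i _; apply: posdef_qform_ge0.
Qed.

End KroneckerLift.

Lemma multinorm_bound_le (R : realFieldType) (n N m : nat) (A : 'I_m -> 'M[R]_n)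
    (E : {set 'I_N * 'I_N * 'I_m}) (Q : 'I_N -> 'M[R]_n) (g g' : R) :
  quadratic_multinorm Q -> 0 <= g -> g <= g' ->
  multinorm_bound A E Q g -> multinorm_bound A E Q g'.
Proof.
move=> Q_pos g_ge0 le_gg' bound_g e eE x; apply: le_trans (bound_g e eE x) _.
rewrite !qformZ ler_wpM2r ?posdef_qform_ge0 //.
by rewrite ler_pXn2r ?nnegrE // (le_trans g_ge0).
Qed.

Lemma le_inf_sqr_mul (R : realType) (S : set R) (a b : R) :
  nonempty S -> (forall g, S g -> 0 <= g /\ a <= g ^+ 2 * b) -> 0 <= b ->
  a <= inf S ^+ 2 * b.
Proof.
move=> [g0 Sg0] S_ge b_ge0; have [_ a_le] := S_ge g0 Sg0.
rewrite le_eqVlt in b_ge0; case/orP: b_ge0 => [/eqP b0 | b_gt0].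
  by move: a_le; rewrite -b0 !mulr0.
rewrite -ler_pdivrMr //; have [ab_lt0 | ab_ge0] := ltP (a / b) 0.
  exact: le_trans (ltW ab_lt0) (sqr_ge0 _).
have sqrt_le_inf : Num.sqrt (a / b) <= inf S.
  apply: lb_le_inf => [|g Sg]; first by exists g0.
  have [g_ge0 a_le_g] := S_ge g Sg.
  by rewrite -(ger0_norm g_ge0) -sqrtr_sqr ler_wsqrtr // ler_pdivrMr.
rewrite -(sqr_sqrtr ab_ge0) ler_pXn2r ?nnegrE ?sqrtr_ge0 //.
exact: le_trans (sqrtr_ge0 _) sqrt_le_inf.
Qed.

Lemma multinorm_value_exists (R : realType) (n N m : nat) (A : 'I_m -> 'M[R]_n)
    (E : {set 'I_N * 'I_N * 'I_m}) (Q : 'I_N -> 'M[R]_n) (g : R) :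
  quadratic_multinorm Q -> 0 <= g -> multinorm_bound A E Q g ->
  exists g0, multinorm_value A E Q g0 /\ g0 <= g.
Proof.
move=> Q_pos g_ge0 bound_g.
pose S := [set g' | 0 <= g' /\ multinorm_bound A E Q g']%classic.
have inf_le : lbound S (inf S) by apply: ge_inf; exists 0 => g' [].
exists (inf S); split; last exact: inf_le.
split; first by apply: lb_le_inf => [|g' []]; first by exists g.
split=> [e eE x|g' g'_ge0 bound_g']; last exact: inf_le.
rewrite qformZ; apply: le_inf_sqr_mul; first by exists g.
  by move=> g' [g'_ge0 /(_ e eE x)]; rewrite qformZ.
exact: posdef_qform_ge0.
Qed.

Theorem proposition3p14 (R : realType) (n N m : nat) (A : 'I_m -> 'M[R]_n)
  (E : {set 'I_N * 'I_N * 'I_m}) (gamma : R) :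
  strongly_connected E -> 0 < gamma ->
  (exists QG : 'M[R]_(N * n), posdef QG /\
     forall e, e \in E ->
       loewner_le ((kron_lift A e)^T *m QG *m kron_lift A e - gamma ^+ 2 *: QG) 0)
  <->
  (exists Q : 'I_N -> 'M[R]_n, quadratic_multinorm Q /\
     exists g, multinorm_value A E Q g /\ g <= gamma).
Proof.
move=> _ gamma_gt0; split.
- case=> QG [QG_pos QG_bound].
  have Q_pos : quadratic_multinorm (diag_block QG) by move=> i; exact: posdef_diag_block.
  exists (diag_block QG); split=> //.
  apply: multinorm_value_exists (ltW gamma_gt0) _ => //= e eE.
  by apply: loewner_kron_lift_diag_block; apply/loewner_le_subr0/QG_bound.
- case=> Q [Q_pos [g [[g_ge0 [bound_g _]] le_g_gamma]]].
  exists (block_diag Q); split; first exact: posdef_block_diag.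
  move=> e eE; apply/loewner_le_subr0/loewner_kron_lift_block_diag => //.
    exact: sqr_ge0.
  exact: (multinorm_bound_le Q_pos g_ge0 le_g_gamma bound_g).
Qed.
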